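(* Let $K$ be a field of characteristic zero, $g\ge 3$ and $c\ge 3$. Then $\alpha(M_{g,c})=\dim M_{g,c}-g$.
   Context: Lower central series: $\mathfrak{h}^1=\mathfrak{h}$, $\mathfrak{h}^{k+1}=[\mathfrak{h},\mathfrak{h}^k]$. $F_g$ is the free Lie algebra over $K$ on $g$ generators, $F_{g,c}=F_g/F_g^{c+1}$, and $M_{g,c}:=F_{g,c}/[F_{g,c}^2,F_{g,c}^2]$. $\alpha(\mathfrak{h})$ is the maximal dimension of an abelian subalgebra of $\mathfrak{h}$. *)

From HB Require Import structures.
From mathcomp Require Import all_boot all_order all_algebra.
Set Implicit Arguments. Unset Strict Implicit. Unset Printing Implicit Defensive.
Import GRing.Theory.
Local Open Scope ring_scope.

Section Lie.
Variables (K : fieldType) (V : lmodType K).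

Definition is_lie_bracket (br : V -> V -> V) : Prop :=
  [/\ forall a x y z, br (a *: x + y) z = a *: br x z + br y z,
      forall a x y z, br z (a *: x + y) = a *: br z x + br z y,
      forall x, br x x = 0 &
      forall x y z, br x (br y z) + br y (br z x) + br z (br x y) = 0].

Definition in_span (S : V -> Prop) (v : V) : Prop :=
  exists n (a : 'I_n -> K) (w : 'I_n -> V),
    (forall i, S (w i)) /\ v = \sum_(i < n) a i *: w i.

(* lcs br k = h^{k+1} : lower central series, h^1 = h, h^{k+1} = [h, h^k] *)
Fixpoint lcs (br : V -> V -> V) (k : nat) : V -> Prop :=
  match k with
  | 0 => fun _ => True
  | k'.+1 => in_span (fun v => exists x y, lcs br k' y /\ v = br x y)
  end.

Definition nilp_class_le (br : V -> V -> V) (c : nat) : Prop :=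
  forall v, lcs br c v -> v = 0.

Definition metabelian (br : V -> V -> V) : Prop :=
  forall x y, lcs br 1 x -> lcs br 1 y -> br x y = 0.

Definition lie_generated (br : V -> V -> V) (I : Type) (x : I -> V) : Prop :=
  forall P : V -> Prop,
    P 0 -> (forall a u v, P u -> P v -> P (a *: u + v)) ->
    (forall u v, P u -> P v -> P (br u v)) ->
    (forall i, P (x i)) -> forall v, P v.

End Lie.

Definition lie_hom (K : fieldType) (V W : lmodType K)
  (brV : V -> V -> V) (brW : W -> W -> W) (f : V -> W) : Prop :=
  (forall a u v, f (a *: u + v) = a *: f u + f v) /\
  (forall u v, f (brV u v) = brW (f u) (f v)).

(* (M, br, x) is the free nilpotent-of-class-c metabelian Lie algebra on the
   g generators x, i.e. M_{g,c} = F_{g,c} / [F_{g,c}^2, F_{g,c}^2]: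
   it lies in the variety (class <= c, metabelian), is generated by x, and
   every assignment of the generators in a Lie algebra of that variety
   extends to a Lie algebra homomorphism. *)
Definition is_free_nilp_metabelian (K : fieldType) (g c : nat)
  (M : lmodType K) (br : M -> M -> M) (x : 'I_g -> M) : Prop :=
  [/\ is_lie_bracket br, lie_generated br x, nilp_class_le br c,
      metabelian br &
      forall (L : lmodType K) (brL : L -> L -> L) (y : 'I_g -> L),
        is_lie_bracket brL -> nilp_class_le brL c -> metabelian brL ->
        exists f : M -> L, lie_hom br brL f /\ forall i, f (x i) = y i].

Definition abelian_subalg (K : fieldType) (M : vectType K)
  (br : M -> M -> M) (U : {vspace M}) : Prop :=
  forall u v, u \in U -> v \in U -> br u v = 0.

Definition alpha_eq (K : fieldType) (M : vectType K)
  (br : M -> M -> M) (n : nat) : Prop :=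
  (exists U : {vspace M}, abelian_subalg br U /\ \dim U = n) /\
  (forall U : {vspace M}, abelian_subalg br U -> (\dim U <= n)%N).

From HB Require Import structures.
From mathcomp Require Import all_boot all_order all_algebra.
From mathcomp Require Import ring zify.
Set Implicit Arguments. Unset Strict Implicit. Unset Printing Implicit Defensive.
Import GRing.Theory.
Local Open Scope ring_scope.

(* Write M^2 = [M, M]. M is the direct sum of the span of the generators
   and of M^2, which is abelian since M is metabelian: this is an abelian
   subalgebra of dimension dim M - g. The coefficients of x_k and x_j in an
   element of M are read off by a homomorphism onto the 4-dimensional
   filiform Lie algebra, which is metabelian of class 3. If an abelian U is
   not contained in M^2, it contains some a with a nonzero coefficient at
   some x_k. Commuting with a forces the coefficient vectors of all elements
   of U to be proportional to that of a, so dim U <= dim (U :&: M^2) + 1,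
   while [a, [x_k, x_j]] <> 0 shows that U :&: M^2 is a proper subspace of
   M^2. *)

Definition linear_of (K : fieldType) (V W : lmodType K) (f : V -> W)
  (fL : linear f) : {linear V -> W} :=
  HB.pack f (GRing.isLinear.Build K V W *:%R f fL).

Lemma linear_sumZ (K : fieldType) (V W : lmodType K) (f : V -> W) (fL : linear f)
  n (a : 'I_n -> K) (w : 'I_n -> V) :
  f (\sum_(i < n) a i *: w i) = \sum_(i < n) a i *: f (w i).
Proof.
rewrite -[f]/(linear_of fL : V -> W) linear_sum.
by apply: eq_bigr => i _; rewrite linearZ.
Qed.

Lemma lcs_lie_hom (K : fieldType) (V W : lmodType K) (brV : V -> V -> V)
  (brW : W -> W -> W) (f : V -> W) k v :
  lie_hom brV brW f -> lcs brV k v -> lcs brW k (f v).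
Proof.
case=> fL fbr; elim: k v => [//|k IHk] v [n [a [w [hw ->]]]].
exists n, a, (f \o w); split=> [i /=|]; last exact: linear_sumZ.
have [u [y [hy ->]]] := hw i.
by exists (f u), (f y); rewrite fbr; split=> //; apply: IHk.
Qed.

Lemma sum_mulr_delta (R : pzSemiRingType) n (F : 'I_n -> R) k :
  \sum_i F i * (i == k)%:R = F k.
Proof.
by rewrite (bigD1 k) //= eqxx mulr1 big1 ?addr0 // => i /negPf ->; rewrite mulr0.
Qed.

Lemma exists_ord_neq n (n_gt1 : (1 < n)%N) (k : 'I_n) : exists j, k != j.
Proof.
pose i0 : 'I_n := Ordinal (ltnW n_gt1).
have [->|] := eqVneq k i0; last by exists i0.
by exists (Ordinal n_gt1).
Qed.

Local Notation ix i := (@Ordinal 4 i isT).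

Section Filiform.
Variable K : fieldType.
Implicit Types p q v : 'rV[K]_4.

(* The filiform Lie algebra with basis e0, e1, e2, e3 and nonzero brackets
   [e0, e1] = e2, [e0, e2] = e3: the free metabelian Lie algebra of class 3
   on two generators, modulo [e1, e2]. *)
Definition fil4_br p q : 'rV[K]_4 := \row_(i < 4)
  (if i == 2 :> nat then p 0 (ix 0) * q 0 (ix 1) - p 0 (ix 1) * q 0 (ix 0)
   else if i == 3 :> nat then p 0 (ix 0) * q 0 (ix 2) - p 0 (ix 2) * q 0 (ix 0)
   else 0).

Lemma fil4_lie : is_lie_bracket fil4_br.
Proof.
by split=> *; apply/rowP => i; rewrite !mxE /=; do 2?case: ifP => _; ring.
Qed.

Lemma fil4_lcs k v : lcs fil4_br k v -> (0 < k)%N ->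
  forall i : 'I_4, (i <= k)%N -> v 0 i = 0.
Proof.
elim: k v => [//|k IHk] v [n [a [w [hw ->]]]] _ i ik.
rewrite summxE big1 // => l _; have [p [q [/IHk hq ->]]] := hw l.
rewrite !mxE; case: eqP => [i2|_].
  by rewrite !hq //=; try (move: i2 ik; lia); ring.
case: eqP => [i3|_]; last by rewrite mulr0.
by rewrite !hq //=; try (move: i3 ik; lia); ring.
Qed.

Lemma fil4_nilp_class c : (3 <= c)%N -> nilp_class_le fil4_br c.
Proof.
move=> hc v /fil4_lcs v0; apply/rowP => i; rewrite mxE v0 //; first lia.
by apply: leq_trans hc; rewrite -ltnS.
Qed.

Lemma fil4_metabelian : metabelian fil4_br.
Proof.
move=> p q /fil4_lcs p0 /fil4_lcs q0; apply/rowP => i; rewrite !mxE.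
rewrite (p0 _ (ix 0)) // (p0 _ (ix 1)) // (q0 _ (ix 0)) // (q0 _ (ix 1)) //.
by do 2?case: ifP => _; ring.
Qed.

End Filiform.

Section FreeNilpotentMetabelian.
Variables (K : fieldType) (M : vectType K) (br : M -> M -> M).

Definition derived : {vspace M} :=
  <<[seq br u v | u <- vbasis fullv, v <- vbasis fullv]>>%VS.

Variables (g c : nat) (x : 'I_g -> M).
Hypotheses (g_gt1 : (1 < g)%N) (hc : (3 <= c)%N)
  (free_x : @is_free_nilp_metabelian K g c M br x).

Let br_lie : is_lie_bracket br. Proof. by case: free_x. Qed.
Let x_gen : lie_generated br x. Proof. by case: free_x. Qed.
Let br_metabelian : metabelian br. Proof. by case: free_x. Qed.
Let x_universal (L : lmodType K) (brL : L -> L -> L) (y : 'I_g -> L) :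
  is_lie_bracket brL -> nilp_class_le brL c -> metabelian brL ->
  exists f : M -> L, lie_hom br brL f /\ forall i, f (x i) = y i.
Proof. by case: free_x => _ _ _ _; apply. Qed.

Let br_linearl v : linear (br^~ v).
Proof. by case: br_lie => brl _ _ _ a u w; rewrite /= brl. Qed.
Let br_linearr u : linear (br u).
Proof. by case: br_lie => _ brr _ _ a v w; rewrite brr. Qed.

Lemma mem_derived_br u v : br u v \in derived.
Proof.
rewrite (coord_vbasis (memvf u)) (linear_sumZ (br_linearl _)).
apply: memv_suml => i _; apply: memvZ.
rewrite (coord_vbasis (memvf v)) (linear_sumZ (br_linearr _)).
apply: memv_suml => j _; apply: memvZ.
by apply/memv_span/allpairs_f; apply: mem_nth; rewrite size_tuple.
Qed.

Lemma derived_lcs1 d : d \in derived -> lcs br 1 d.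
Proof.
rewrite /derived; set S := [seq br u v | u <- _, v <- _].
move=> /(coord_span (X := in_tuple S)) ->.
exists (size S), (fun i => coord (in_tuple S) i d), (nth 0 S); split=> // i.
have /allpairsP [[u v] [_ _ ->]] : S`_i \in S by apply: mem_nth.
by exists u, v.
Qed.

Lemma derived_abelian : abelian_subalg br derived.
Proof. by move=> u v /derived_lcs1 ? /derived_lcs1 ?; apply: br_metabelian. Qed.

Definition xcomb (al : 'I_g -> K) : M := \sum_i al i *: x i.

Lemma xcomb0 : xcomb (fun=> 0) = 0.
Proof. by rewrite /xcomb big1 // => i _; rewrite scale0r. Qed.

Lemma xcombP a al be :
  xcomb (fun i => a * al i + be i) = a *: xcomb al + xcomb be.
Proof.
rewrite /xcomb scaler_sumr -big_split; apply: eq_bigr => i _.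
by rewrite scalerDl scalerA.
Qed.

Lemma xcomb_delta i : xcomb (fun l => (l == i)%:R) = x i.
Proof.
rewrite /xcomb (bigD1 i) //= eqxx scale1r big1 ?addr0 // => l /negPf ->.
by rewrite scale0r.
Qed.

Lemma xcomb_derived_decomp v : exists al, v - xcomb al \in derived.
Proof.
move: v; apply: (x_gen (P := fun v => exists al, v - xcomb al \in derived)).
- by exists (fun=> 0); rewrite xcomb0 subrr mem0v.
- move=> a u w [al hu] [be hw]; exists (fun i => a * al i + be i).
  by rewrite xcombP opprD addrACA -scalerBr memvD ?memvZ.
- by move=> u w _ _; exists (fun=> 0); rewrite xcomb0 subr0 mem_derived_br.
- by move=> i; exists (fun l => (l == i)%:R); rewrite xcomb_delta subrr mem0v.
Qed.

Definition fil4_gen (k j i : 'I_g) : 'rV[K]_4 :=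
  if i == k then delta_mx 0 (ix 0) else if i == j then delta_mx 0 (ix 1) else 0.

Lemma fil4_gen_coord0 k j i : fil4_gen k j i 0 (ix 0) = (i == k)%:R.
Proof. by rewrite /fil4_gen; case: eqP => _; [|case: eqP => _]; rewrite !mxE. Qed.

Lemma fil4_gen_coord1 k j i : k != j -> fil4_gen k j i 0 (ix 1) = (i == j)%:R.
Proof.
move=> kj; rewrite /fil4_gen; have [->|_] := eqVneq i k.
  by rewrite (negPf kj) !mxE.
by case: eqP => _; rewrite !mxE.
Qed.

Lemma fil4_coord k j : k != j -> exists f : {linear M -> 'rV[K]_4},
  lie_hom br (@fil4_br K) f /\ forall v al, v - xcomb al \in derived ->
  f v 0 (ix 0) = al k /\ f v 0 (ix 1) = al j.
Proof.
move=> kj; have [f [[fL fbr] fx]] := x_universal (fil4_gen k j) (@fil4_lie K)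
  (fil4_nilp_class hc) (@fil4_metabelian K).
exists (linear_of fL); split=> // v al.
move=> /derived_lcs1 /(lcs_lie_hom (conj fL fbr)) /fil4_lcs d0.
rewrite -(subrK (xcomb al) v) linearD !mxE (d0 _ (ix 0)) // (d0 _ (ix 1)) //.
rewrite !add0r linear_sum !summxE; split.
- under eq_bigr => i _ do rewrite linearZ !mxE /= fx fil4_gen_coord0.
  exact: sum_mulr_delta.
- under eq_bigr => i _ do rewrite linearZ !mxE /= fx fil4_gen_coord1 //.
  exact: sum_mulr_delta.
Qed.

Lemma derived_coef_uniq v al be :
  v - xcomb al \in derived -> v - xcomb be \in derived -> al =1 be.
Proof.
move=> hal hbe k; have [j kj] := exists_ord_neq g_gt1 k.
have [f [_ fcoord]] := fil4_coord kj.
by have [<- _] := fcoord _ _ hal; have [<- _] := fcoord _ _ hbe.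
Qed.

Lemma xcomb_derived_eq0 al : xcomb al \in derived -> forall i, al i = 0.
Proof.
move=> hal; apply: (@derived_coef_uniq 0); first by rewrite sub0r memvN.
by rewrite xcomb0 subrr mem0v.
Qed.

Definition xspan : {vspace M} := <<[tuple x i | i < g]>>%VS.

Lemma xspanP v : reflect (exists al, v = xcomb al) (v \in xspan).
Proof.
apply: (iffP idP) => [/coord_span -> | [al ->]].
  exists (coord [tuple x i | i < g] ^~ v).
  by apply: eq_bigr => i _; rewrite nth_mktuple.
apply: memv_suml => i _; apply/memvZ/memv_span.
by rewrite -[x i](nth_mktuple x 0); apply: mem_nth; rewrite size_tuple.
Qed.

Lemma dim_xspan : \dim xspan = g.
Proof.
have /eqP : free [tuple x i | i < g]; last by rewrite size_tuple.
apply/freeP => al al0; apply: xcomb_derived_eq0.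
rewrite /xcomb -(eq_bigr _ (fun i _ => congr1 _ (nth_mktuple x 0 i))).
by rewrite al0 mem0v.
Qed.

Lemma xspan_derived_cap : (xspan :&: derived = 0)%VS.
Proof.
apply/eqP; rewrite -subv0; apply/subvP => v; rewrite memv_cap memv0.
case/andP => /xspanP [al ->] /xcomb_derived_eq0 al0.
by rewrite /xcomb big1 // => i _; rewrite al0 scale0r.
Qed.

Lemma xspan_derived_add : (xspan + derived = fullv)%VS.
Proof.
apply/eqP; rewrite eqEsubv subvf; apply/subvP => v _.
have [al hv] := xcomb_derived_decomp v.
by rewrite -(subrK (xcomb al) v) addrC memv_add //; apply/xspanP; exists al.
Qed.

Lemma dim_full_derived : \dim (fullv : {vspace M}) = (\dim derived + g)%N.
Proof.
rewrite -xspan_derived_add dimv_disjoint_sum ?xspan_derived_cap //.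
by rewrite dim_xspan addnC.
Qed.

Section AbelianSubalgebra.
Variables (U : {vspace M}) (a : M) (al : 'I_g -> K).
Hypotheses (U_abelian : abelian_subalg br U) (aU : a \in U)
  (a_decomp : a - xcomb al \in derived).

Lemma abelian_coef_minor b be : b \in U -> b - xcomb be \in derived ->
  forall i j, al i * be j = al j * be i.
Proof.
move=> bU b_decomp i j; have [-> // | ij] := eqVneq i j.
have [f [[_ fbr] fcoord]] := fil4_coord ij.
have := congr1 (fun m => f m 0 (ix 2)) (U_abelian aU bU).
rewrite /= fbr linear0 !mxE /=.
have [-> ->] := fcoord _ _ a_decomp; have [-> ->] := fcoord _ _ b_decomp.
by move/eqP; rewrite subr_eq0 => /eqP.
Qed.

Lemma abelian_sub_cap_line k : al k != 0 -> (U <= U :&: derived + <[a]>)%VS.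
Proof.
move=> alk; apply/subvP => b bU; have [be b_decomp] := xcomb_derived_decomp b.
pose lam := be k / al k.
have xcomb_be : xcomb be = lam *: xcomb al.
  rewrite /xcomb scaler_sumr; apply: eq_bigr => i _.
  rewrite scalerA; congr (_ *: _); apply: (mulfI alk).
  by rewrite (abelian_coef_minor bU b_decomp) /lam; field.
have b_lam : b - lam *: a = (b - xcomb be) - lam *: (a - xcomb al).
  by rewrite scalerBr -xcomb_be opprB addrA subrK.
rewrite -(subrK (lam *: a) b) memv_add ?memvZ ?memv_line // memv_cap.
by rewrite memvB ?memvZ //= b_lam memvB ?memvZ.
Qed.

Lemma br_xcomm_neq0 k j : al k != 0 -> k != j -> br a (br (x k) (x j)) != 0.
Proof.
move=> alk kj; have [f [[_ fbr] fcoord]] := fil4_coord kj.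
have x_decomp i : x i - xcomb (fun l => (l == i)%:R) \in derived.
  by rewrite xcomb_delta subrr mem0v.
apply: contra_neq alk => /(congr1 (fun m => f m 0 (ix 3))).
rewrite /= !fbr linear0 !mxE /=.
have [-> _] := fcoord _ _ a_decomp; have [-> ->] := fcoord _ _ (x_decomp k).
have [-> ->] := fcoord _ _ (x_decomp j).
by rewrite !eqxx eq_sym (negPf kj) /= => <-; ring.
Qed.

End AbelianSubalgebra.

Lemma abelian_dim_le_derived U :
  abelian_subalg br U -> (\dim U <= \dim derived)%N.
Proof.
move=> U_abelian; have [|/subvPn [a aU aD]] := boolP (U <= derived)%VS.
  exact: dimvS.
have [al a_decomp] := xcomb_derived_decomp a.
have [k alk] : exists k, al k != 0.
  apply/existsP; apply: contraR aD => /existsPn al0.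
  rewrite -(subrK (xcomb al) a) memvD // (_ : xcomb al = 0) ?mem0v //.
  by rewrite /xcomb big1 // => i _; rewrite (eqP (negPn (al0 i))) scale0r.
have [j kj] := exists_ord_neq g_gt1 k.
have dimU : (\dim U <= \dim (U :&: derived) + 1)%N.
  apply: leq_trans (dimvS (abelian_sub_cap_line U_abelian aU a_decomp alk)) _.
  by rewrite (leq_trans (dimv_add_leqif _ _).1) // dim_vline leq_add2l leq_b1.
suff : (\dim (U :&: derived) < \dim derived)%N.
  by rewrite -addn1; apply: leq_trans.
rewrite (ltn_leqif (dimv_leqif_eq (capvSr U derived))); apply/eqP => UD.
have : br (x k) (x j) \in (U :&: derived)%VS by rewrite UD mem_derived_br.
rewrite memv_cap => /andP [xU _].
by case/eqP: (br_xcomm_neq0 a_decomp alk kj); apply: U_abelian.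
Qed.

End FreeNilpotentMetabelian.

Theorem corollary5p3 (K : fieldType) (charK0 : [pchar K] =i pred0)
  (g c : nat) (hg : (3 <= g)%N) (hc : (3 <= c)%N)
  (M : vectType K) (br : M -> M -> M) (x : 'I_g -> M) :
  @is_free_nilp_metabelian K g c M br x ->
  alpha_eq br (\dim (fullv : {vspace M}) - g)%N.
Proof.
have g_gt1 : (1 < g)%N by apply: leq_trans hg.
move=> free_x; rewrite (dim_full_derived g_gt1 hc free_x) addnK; split.
  by exists (derived br); split; first exact: derived_abelian free_x.
exact: abelian_dim_le_derived free_x.
Qed.
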